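(* Let $\Gamma$ be a finite, undirected, simplicial graph with $\#V\Gamma\ge3$ whose complement $\Gamma^c$ is connected. Let $\mathbf{w}\in W_\Gamma$ and let $\mathcal{S}\subseteq W_\Gamma$ be finite. Then there exist $\mathbf{v}\in W_\Gamma$ and a closed walk $(t_1,\dots,t_n)$ in $\Gamma^c$ covering the whole graph such that for all $L\in\mathbb{N}_{\ge1}$ and all $\mathbf{x}\in\mathcal{S}\setminus\{e\}$: $|\mathbf{w}\mathbf{v}(t_1\cdots t_n)^L|=|\mathbf{w}|+|\mathbf{v}|+|(t_1\cdots t_n)^L|$ and $\mathbf{w}\mathbf{v}(t_1\cdots t_n)^L\not\le\mathbf{x}\mathbf{w}\mathbf{v}(t_1\cdots t_n)^L$.
   Context: $\Gamma^c$ is the graph on $V\Gamma$ with an edge between distinct $v,v'$ iff $(v,v')\notin E\Gamma$. $W_\Gamma=\langle V\Gamma\mid v^2=e,\ vv'=v'v \text{ for }(v,v')\in E\Gamma\rangle$ is the right-angled Coxeter group, $|\cdot|$ the word length with respect to the generating set $V\Gamma$, and $\mathbf{u}\le\mathbf{w}$ means $|\mathbf{u}^{-1}\mathbf{w}|=|\mathbf{w}|-|\mathbf{u}|$ (right weak Bruhat order). A walk in a graph $G$ is a sequence of vertices $(v_1,\dots,v_n)$ with $v_i,v_{i+1}$ adjacent in $G$ for all $i<n$; it is closed if in addition $v_1,v_n$ are adjacent, and covers the whole graph if $\{v_1,\dots,v_n\}$ is the full vertex set. The product $t_1\cdots t_n$ is taken in $W_\Gamma$. *)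

From mathcomp Require Import all_boot.
From mathcomp Require Import boolp.
From Stdlib Require Import Relation_Operators.
Set Implicit Arguments. Unset Strict Implicit. Unset Printing Implicit Defensive.

(* A finite simplicial graph Gamma is given by a vertex finType T and a
   symmetric irreflexive edge relation e : rel T. *)

Definition gcompl (T : eqType) (e : rel T) : rel T :=
  fun x y => (x != y) && ~~ e x y.

(* Words over V Gamma represent elements of W_Gamma. One elementary move:
   swap two adjacent commuting letters (v v' -> v' v for (v,v') in E),
   or delete a square v v. *)
Definition rstep (T : eqType) (e : rel T) (u w : seq T) : Prop :=
  (exists a b x y, e x y /\ u = a ++ x :: y :: b /\ w = a ++ y :: x :: b)
  \/ (exists a b x, u = a ++ x :: x :: b /\ w = a ++ b).

(* Equality in W_Gamma = <V | v^2 = e, vv' = v'v for (v,v') in E>: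
   the equivalence relation generated by elementary moves. *)
Definition weq (T : eqType) (e : rel T) : seq T -> seq T -> Prop :=
  clos_refl_sym_trans (seq T) (@rstep T e).

Lemma wlen_ex (T : eqType) (e : rel T) (w : seq T) :
  exists n, `[< exists u : seq T, size u = n /\ weq e u w >].
Proof.
exists (size w); apply/asboolP; exists w; split => //; exact: rst_refl.
Qed.

Definition wlen (T : eqType) (e : rel T) (w : seq T) : nat :=
  ex_minn (wlen_ex e w).

(* Group operations on representatives: product = concatenation,
   inverse = reversal (generators are involutions), identity = [::]. *)
Definition winv (T : Type) (w : seq T) : seq T := rev w.
Definition wpow (T : Type) (w : seq T) (L : nat) : seq T := flatten (nseq L w).

(* Right weak Bruhat order: u <= w iff |u^{-1} w| = |w| - |u|
   (stated additively, avoiding truncated subtraction). *)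
Definition wle (T : eqType) (e : rel T) (u w : seq T) : Prop :=
  wlen e (winv u ++ w) + wlen e u = wlen e w.

(* Elements of W_Gamma are encoded by heaps of pieces: the column of a vertex
   [b] lists the letters of a word that do not commute with [b].  Left
   multiplication acts on columns by pushing or popping, compatibly with the
   defining relations, and a word is reduced iff its heap has as many pieces
   as letters; this solves the word problem and computes |.|.

   Take w reduced, then a walk v in Gamma^c starting at a vertex that is not a
   right descent of w, then powers of a closed covering walk: consecutive
   letters of a walk in Gamma^c never commute, so the whole word is reduced.
   For every vertex b with a path b z z' (z' <> b) in Gamma^c, v contains
   (z z')^K z b (z z')^K z, so the column of b has a [true] at depth >= K
   followed by K entries [false], where K bounds the lengths of the words in S.
   If g <= x g, a reduced word of g followed by a reduced word H of g^-1 x g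
   is reduced, so acting by x, which only touches the top |x| <= K entries of
   a column, appends the column of H at the bottom.  Choosing b not commuting
   with the first letter of H (possible as #V >= 3 and Gamma^c is connected),
   the shift would move the isolated [true] into the gap of [false]s; hence H
   is empty and x = e. *)

From mathcomp Require Import all_boot.
From mathcomp Require Import zify.
From mathcomp Require Import boolp.
From Stdlib Require Import Relation_Operators.
Set Implicit Arguments. Unset Strict Implicit. Unset Printing Implicit Defensive.

Section Words.
Variables (T : eqType) (e : rel T).

Lemma weq_refl u : weq e u u. Proof. exact: rst_refl. Qed.
Lemma weq_sym u w : weq e u w -> weq e w u. Proof. exact: rst_sym. Qed.
Lemma weq_trans u w z : weq e u w -> weq e w z -> weq e u z.
Proof. exact: rst_trans. Qed.

Lemma rstep_cat p q u w : rstep e u w -> rstep e (p ++ u ++ q) (p ++ w ++ q).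
Proof.
case=> [[a [b [x [y [exy [-> ->]]]]]] | [a [b [x [-> ->]]]]].
  by left; exists (p ++ a), (b ++ q), x, y; rewrite -!catA.
by right; exists (p ++ a), (b ++ q), x; rewrite -!catA.
Qed.

Lemma weq_cat p q u w : weq e u w -> weq e (p ++ u ++ q) (p ++ w ++ q).
Proof.
elim=> [u1 w1 H|u1|u1 w1 _ IH|u1 w1 z1 _ IH1 _ IH2].
- by apply: rst_step; apply: rstep_cat.
- exact: weq_refl.
- exact: weq_sym.
- exact: weq_trans IH1 IH2.
Qed.

Lemma weq_cat2 u u' w w' : weq e u u' -> weq e w w' -> weq e (u ++ w) (u' ++ w').
Proof.
move=> Hu Hw; apply: (@weq_trans _ (u' ++ w)).
  by have := @weq_cat [::] w _ _ Hu.
by have := @weq_cat u' [::] _ _ Hw; rewrite !cats0.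
Qed.

Lemma weq_cons a u w : weq e u w -> weq e (a :: u) (a :: w).
Proof. exact: (@weq_cat2 [:: a]) (weq_refl _). Qed.

Lemma weq_cancel a s : weq e (a :: a :: s) s.
Proof. by apply: rst_step; right; exists [::], s, a. Qed.

Lemma weq_commute a r s : all (e a) r -> weq e (a :: r ++ s) (r ++ a :: s).
Proof.
elim: r => [|x r IH] /=; first by move=> _; apply: weq_refl.
case/andP=> hx hr; apply: (@weq_trans _ (x :: a :: r ++ s)).
  by apply: rst_step; left; exists [::], (r ++ s), a, x.
exact/weq_cons/IH.
Qed.

Lemma weq_cat_rev u : weq e (u ++ rev u) [::].
Proof.
elim: u => [|a u IH] /=; first exact: weq_refl.
rewrite rev_cons -cats1 catA; apply: weq_trans (weq_cancel a [::]).
by apply: weq_cons; have := weq_cat2 IH (weq_refl [:: a]).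
Qed.

Lemma weq_cancel_inv g u : weq e (g ++ winv g ++ u) u.
Proof. by rewrite catA; have := weq_cat2 (weq_cat_rev g) (weq_refl u). Qed.

Lemma weq1_conj g x : weq e (winv g ++ x ++ g) [::] -> weq e x [::].
Proof.
move=> h; have := weq_cat2 (weq_refl x) (weq_cat_rev g); rewrite cats0.
move/weq_sym/weq_trans; apply.
apply: weq_trans (weq_sym (weq_cancel_inv g _)) _.
apply: weq_trans (weq_cat_rev g); rewrite /winv.
have := weq_cat2 (weq_cat2 (weq_refl g) h) (weq_refl (rev g)).
by rewrite cats0 -!catA.
Qed.

End Words.

Section Heaps.
Variables (T : finType) (e : rel T).
Hypotheses (e_sym : symmetric e) (e_irr : irreflexive e).

Definition ncomm (a b : T) : bool := (a == b) || ~~ e a b.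

(* The column [pile r b] lists, top first, the letters of [r] not commuting
   with [b], each recorded as whether it is [b] itself. *)
Definition pile (r : seq T) : {ffun T -> seq bool} :=
  [ffun b => [seq x == b | x <- r & ncomm x b]].

Definition top (s : seq bool) : bool := head false s.

Definition act (a : T) (s : {ffun T -> seq bool}) : {ffun T -> seq bool} :=
  if top (s a) then [ffun b => if ncomm a b then behead (s b) else s b]
  else [ffun b => if ncomm a b then (a == b) :: s b else s b].

Definition heap (u : seq T) : {ffun T -> seq bool} := foldr act (pile [::]) u.

Fixpoint reduced (r : seq T) : bool :=
  if r is a :: r' then ~~ top (pile r' a) && reduced r' else true.

Definition top_coherent (s : {ffun T -> seq bool}) (a : T) : Prop :=
  top (s a) -> forall b, ncomm a b -> s b = (a == b) :: behead (s b).

Lemma ncommC a b : ncomm a b = ncomm b a.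
Proof. by rewrite /ncomm eq_sym e_sym. Qed.

Lemma ncommxx a : ncomm a a.
Proof. by rewrite /ncomm eqxx. Qed.

Lemma ncommN_e a x : ~~ ncomm x a -> e a x.
Proof. by rewrite /ncomm negb_or negbK e_sym => /andP[]. Qed.

Lemma pile_nil b : pile [::] b = [::].
Proof. by rewrite ffunE. Qed.

Lemma pile_cons a r b :
  pile (a :: r) b = if ncomm a b then (a == b) :: pile r b else pile r b.
Proof. by rewrite !ffunE /=; case: ifP. Qed.

Lemma pile_cat r1 r2 b : pile (r1 ++ r2) b = pile r1 b ++ pile r2 b.
Proof. by rewrite !ffunE filter_cat map_cat. Qed.

Lemma size_pile_count r b : size (pile r b) = count (ncomm^~ b) r.
Proof. by rewrite ffunE size_map size_filter. Qed.

Lemma pile_notin r b : b \notin r -> pile r b = nseq (count (ncomm^~ b) r) false.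
Proof.
elim: r => [|x r IH]; first by rewrite pile_nil.
rewrite inE negb_or => /andP[hx hr]; rewrite pile_cons IH //= ncommC.
by case: (ncomm b x) => //=; rewrite eq_sym (negbTE hx).
Qed.

Lemma pile_commuting r a : all (fun x => ~~ ncomm x a) r -> pile r a = [::].
Proof.
elim: r => [|x r IH]; first by rewrite pile_nil.
by case/andP=> hx hr; rewrite pile_cons (negbTE hx) IH.
Qed.

Lemma top_pileP r a : top (pile r a) ->
  exists r1 r2, r = r1 ++ a :: r2 /\ all (fun x => ~~ ncomm x a) r1.
Proof.
elim: r => [|x r IH]; first by rewrite pile_nil.
rewrite pile_cons; case: ifP => hnc /=.
  by move/eqP=> <-; exists [::], r.
move/IH=> [r1 [r2 [-> h]]]; exists (x :: r1), r2; split => //=.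
by rewrite hnc.
Qed.

Section LeftFactor.
Variables (r1 r2 : seq T) (a : T).
Hypothesis r1a : all (fun x => ~~ ncomm x a) r1.

Lemma pile_lfactor_self : pile (r1 ++ a :: r2) a = true :: pile (r1 ++ r2) a.
Proof. by rewrite !pile_cat pile_cons ncommxx eqxx (pile_commuting r1a). Qed.

Lemma pile_lfactor_other b : b != a -> ncomm a b ->
  pile (r1 ++ a :: r2) b = false :: pile (r1 ++ r2) b.
Proof.
move=> hba hab; have hb : b \notin r1.
  by apply/negP=> /(allP r1a); rewrite ncommC hab.
rewrite !pile_cat pile_cons hab (pile_notin hb) eq_sym (negbTE hba).
by elim: (count _ _) => //= n ->.
Qed.

End LeftFactor.

Lemma pile_commuting_del r1 r2 a b : ~~ ncomm a b ->
  pile (r1 ++ a :: r2) b = pile (r1 ++ r2) b.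
Proof. by move=> h; rewrite !pile_cat pile_cons (negbTE h). Qed.

Lemma reduced_catr r1 r2 : reduced (r1 ++ r2) -> reduced r2.
Proof. by elim: r1 => //= x r1 IH /andP[_ /IH]. Qed.

Lemma reduced_catl r1 r2 : reduced (r1 ++ r2) -> reduced r1.
Proof.
elim: r1 => //= x r1 IH /andP[h /IH ->]; rewrite andbT.
by move: h; rewrite pile_cat; case: (pile r1 x).
Qed.

Lemma reduced_del r1 r2 a : reduced (r1 ++ a :: r2) ->
  all (fun x => ~~ ncomm x a) r1 -> reduced (r1 ++ r2).
Proof.
elim: r1 => [|x r1 IH] /=; first by case/andP.
case/andP=> h hc /andP[hx hr]; rewrite IH // andbT.
by rewrite -(@pile_commuting_del r1 r2 a x) // ncommC.
Qed.

Lemma top_coherent_pile r a : top_coherent (pile r) a.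
Proof.
move=> /top_pileP [r1 [r2 [-> h]]] b hab.
case: (eqVneq b a) => [->|hba]; first by rewrite pile_lfactor_self // eqxx.
by rewrite pile_lfactor_other // eq_sym (negbTE hba).
Qed.

Lemma reduced_top_behead r a : reduced r -> top (pile r a) ->
  ~~ top (behead (pile r a)).
Proof.
move=> hr /top_pileP [r1 [r2 [E h]]].
rewrite E pile_lfactor_self //= !pile_cat (pile_commuting h) /=.
by move: hr; rewrite E => /reduced_catr /= /andP[].
Qed.

Lemma actK a s : top_coherent s a -> (top (s a) -> ~~ top (behead (s a))) ->
  act a (act a s) = s.
Proof.
move=> hI hF; rewrite {2}/act; case: ifP => ht.
- rewrite /act ffunE ncommxx (negbTE (hF ht)).
  apply/ffunP=> b; rewrite !ffunE; case hab: (ncomm a b) => //.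
  by symmetry; apply: hI.
- rewrite /act ffunE ncommxx eqxx /=.
  by apply/ffunP=> b; rewrite !ffunE; case: (ncomm a b).
Qed.

Lemma act_comm a b s : e a b -> top_coherent s a -> top_coherent s b ->
  act a (act b s) = act b (act a s).
Proof.
move=> hab hIa hIb.
have nab : ~~ ncomm a b.
  by rewrite /ncomm hab orbF; apply: contraTN hab => /eqP ->; rewrite e_irr.
have nba : ~~ ncomm b a by rewrite ncommC.
have Ea : act b s a = s a by rewrite /act; case: ifP; rewrite ffunE (negbTE nba).
have Eb : act a s b = s b by rewrite /act; case: ifP; rewrite ffunE (negbTE nab).
rewrite [act a (act b s)]/act Ea [act b (act a s)]/act Eb; apply/ffunP=> c.
case hta: (top (s a)); case htb: (top (s b)); rewrite !ffunE /act hta htb !ffunE;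
  case hac: (ncomm a c); case hbc: (ncomm b c) => //;
  (have ca : (a == c) = false
     by apply/negbTE/eqP => E; move: hbc; rewrite -E ncommC (negbTE nab));
  (have cb : (b == c) = false
     by apply/negbTE/eqP => E; move: hac; rewrite -E (negbTE nab));
  rewrite ?ca ?cb //=.
- by have := hIa hta c hac; rewrite ca.
- by have := hIb htb c hbc; rewrite cb => <-.
Qed.

Lemma act_pile a r : reduced r ->
  (act a (pile r) = pile (a :: r) /\ reduced (a :: r)) \/
  (exists r', [/\ act a (pile r) = pile r', reduced r', weq e r' (a :: r)
                & size r' < size r]).
Proof.
move=> hr; rewrite /act; case ht: (top (pile r a)); last first.
  left; split; last by rewrite /= ht.
  by apply/ffunP=> b; rewrite [in LHS]ffunE pile_cons.
right; move: (ht) => /top_pileP [r1 [r2 [E h]]].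
exists (r1 ++ r2); split.
- apply/ffunP=> b; rewrite [in LHS]ffunE E; case hab: (ncomm a b).
  + case: (eqVneq b a) => [->|hba]; first by rewrite pile_lfactor_self.
    by rewrite pile_lfactor_other.
  + by rewrite pile_commuting_del // hab.
- by apply: (@reduced_del _ _ a); rewrite -?E.
- rewrite E; apply: weq_sym; apply: (@weq_trans _ _ _ (r1 ++ a :: a :: r2)).
    by apply: weq_commute; apply/allP=> x /(allP h) /ncommN_e.
  by have := @weq_cat _ e r1 [::] _ _ (weq_cancel e a r2); rewrite !cats0.
- by rewrite E !size_cat /= addnS.
Qed.

Lemma heap_spec u : exists r, [/\ heap u = pile r, reduced r, weq e r u,
  size r <= size u & size r = size u -> r = u].
Proof.
elim: u => [|a u [r [E hr hw hs hs']]]; first by exists [::]; split=> //; apply: weq_refl.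
rewrite /heap /= -/(heap u) E.
case: (act_pile a hr) => [[-> hr']|[r' [-> hr' hw' hs2]]].
- exists (a :: r); split=> //=; first exact: weq_cons.
  by move=> [/hs' ->].
- exists r'; split=> //; first exact: weq_trans hw' (weq_cons a hw).
  + by apply: leq_trans (ltnW hs2) (leq_trans hs _).
  + by move=> E'; move: hs2; rewrite E' ltnNge (leq_trans hs (leqnSn _)).
Qed.

Lemma heap_reduced r : reduced r -> heap r = pile r.
Proof.
elim: r => [|a r IH] //= /andP[ht hr].
rewrite /heap /= -/(heap r) IH // /act (negbTE ht).
by apply/ffunP=> b; rewrite [in LHS]ffunE pile_cons.
Qed.

Lemma heap_cat p q : heap (p ++ q) = foldr act (heap q) p.
Proof. by rewrite /heap foldr_cat. Qed.

Lemma heap_rstep u w : rstep e u w -> heap u = heap w.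
Proof.
case=> [[p [q [x [y [exy [-> ->]]]]]] | [p [q [x [-> ->]]]]];
  rewrite !heap_cat /=; have [r [-> hr _ _ _]] := heap_spec q.
- by rewrite act_comm //; apply: top_coherent_pile.
- by rewrite actK //; [apply: top_coherent_pile | apply: reduced_top_behead].
Qed.

Lemma heap_weq u w : weq e u w -> heap u = heap w.
Proof. by elim=> [u1 w1 /heap_rstep|u1|u1 w1 _ ->|u1 w1 z1 _ -> _ ->]. Qed.

Lemma sum_count_pile r : \sum_(b : T) count id (pile r b) = size r.
Proof.
elim: r => [|a r IH]; first by apply: big1 => b _; rewrite pile_nil.
rewrite /= -IH (eq_bigr (fun b => (a == b) + count id (pile r b))); last first.
  move=> b _; rewrite pile_cons; case: ifP => //= hn.
  by case: eqP hn => // <-; rewrite ncommxx.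
rewrite big_split /= (bigD1 a) //= eqxx big1 // => b /negbTE.
by rewrite eq_sym => ->.
Qed.

Lemma eq_pile_size r r' : pile r = pile r' -> size r = size r'.
Proof. by move=> E; rewrite -sum_count_pile E sum_count_pile. Qed.

Lemma wlen_min u u' : weq e u' u -> wlen e u <= size u'.
Proof.
move=> h; rewrite /wlen; case: ex_minnP => n _; apply.
by apply/asboolP; exists u'.
Qed.

Lemma wlen_rep u : exists2 u0, size u0 = wlen e u & weq e u0 u.
Proof. by rewrite /wlen; case: ex_minnP => n /asboolP [u0 [h1 h2]] _; exists u0. Qed.

Lemma wlen_heap u r : heap u = pile r -> wlen e u = size r.
Proof.
move=> E; apply/eqP; rewrite eqn_leq; apply/andP; split.
- have [r0 [E0 _ hw _ _]] := heap_spec u.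
  by rewrite (@eq_pile_size r r0) -?E -?E0 //; apply: wlen_min.
- have [u0 hs hw] := wlen_rep u; have [r0 [E0 _ _ hs0 _]] := heap_spec u0.
  by rewrite -hs (@eq_pile_size r r0) // -E -E0; apply/heap_weq/weq_sym.
Qed.

Lemma wlen_reduced r : reduced r -> wlen e r = size r.
Proof. by move/heap_reduced; apply: wlen_heap. Qed.

Lemma reduced_wlen u : wlen e u = size u -> reduced u.
Proof. by have [r [E hr _ _ hs]] := heap_spec u; rewrite (wlen_heap E) => /hs <-. Qed.

Lemma wlen_weq u w : weq e u w -> wlen e u = wlen e w.
Proof.
move=> h; have [r [E _ _ _ _]] := heap_spec u.
by rewrite (wlen_heap E) (@wlen_heap w r) // -(heap_weq h).
Qed.

Lemma reduced_rep u : exists2 r, weq e r u & reduced r.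
Proof. by have [r [_ hr hw _ _]] := heap_spec u; exists r. Qed.

Lemma foldr_act_drop (s : {ffun T -> seq bool}) x b :
  exists2 n, n <= size x &
    exists2 m, m <= size x & drop n (s b) = drop m (foldr act s x b).
Proof.
elim: x => [|a x [n hn [m hm IH]]]; first by exists 0 => //; exists 0.
rewrite /= /act; case: ifP => _; rewrite ffunE; case: ifP => _ /=;
  try by exists n; [lia | exists m; [lia | ]].
- case: m hm IH => [|m] hm IH.
    by exists n.+1; [lia | exists 0 => //; rewrite -add1n -drop_drop IH !drop0 drop1].
  by exists n; [lia | exists m; [lia | rewrite -drop1 drop_drop addn1]].
- by exists n; [lia | exists m.+1].
Qed.

(* Comparing bottoms, the [true] at depth [size X] would reappear [size Q]
   entries lower, inside the gap of [false]s. *)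
Lemma gap_shift_nil (O Q X Y : seq bool) K n m :
  O = X ++ true :: nseq K false ++ Y -> K <= size X -> n <= K -> m <= K ->
  drop n O = drop m (O ++ Q) -> Q = [::].
Proof.
move=> EO hX hn hm E; case: Q E => [//|q Q] E; exfalso.
have hO : size O = size X + K.+1 + size Y.
  rewrite EO size_cat /= size_cat size_nseq; lia.
have hmn : m = n + (size Q).+1.
  have := congr1 size E; rewrite !size_drop size_cat /= hO; lia.
have := congr1 (nth false ^~ (size X - n)) E; rewrite !nth_drop.
rewrite subnKC; last exact: leq_trans hn hX.
rewrite hmn addnAC subnKC; last exact: leq_trans hn hX.
rewrite nth_cat ifT; last by rewrite hO; lia.
rewrite EO !nth_cat ltnn subnn ifF; last by lia.
rewrite addKn /= nth_cat size_nseq ifT; last by lia.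
by rewrite nth_nseq ifT //; lia.
Qed.

End Heaps.

Section Obstruction.
Variables (T : finType) (e : rel T).
Hypotheses (e_sym : symmetric e) (e_irr : irreflexive e).

Definition deep_gap (K : nat) (s : seq T) (b : T) : Prop :=
  exists X Y, pile e s b = X ++ true :: nseq K false ++ Y /\ K <= size X.

Lemma deep_gap_catl K l s b : deep_gap K s b -> deep_gap K (l ++ s) b.
Proof.
move=> [X [Y [E h]]]; exists (pile e l b ++ X), Y; rewrite pile_cat E catA size_cat.
by split=> //; apply: leq_trans h (leq_addl _ _).
Qed.

Lemma deep_gap_catr K s r b : deep_gap K s b -> deep_gap K (s ++ r) b.
Proof.
move=> [X [Y [E h]]]; exists X, (Y ++ pile e r b).
by rewrite pile_cat E -catA /= -catA.
Qed.

Lemma deep_gap_act_nil K G H x b : deep_gap K G b -> size x <= K ->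
  foldr (act e) (pile e G) x = pile e (G ++ H) -> pile e H b = [::].
Proof.
move=> [X [Y [EG hX]]] hx E; have [n hn [m hm D]] := foldr_act_drop e (pile e G) x b.
rewrite E pile_cat in D.
exact: gap_shift_nil EG hX (leq_trans hn hx) (leq_trans hm hx) D.
Qed.

Lemma wle_reduced_cat G g x : reduced e G -> weq e G g -> wle e g (x ++ g) ->
  exists2 H, weq e H (winv g ++ x ++ g) & reduced e (G ++ H).
Proof.
rewrite /wle => hG Gg hle; have [H hs hH] := wlen_rep e (winv g ++ x ++ g).
exists H => //; apply: reduced_wlen => //.
have GH : weq e (G ++ H) (x ++ g) := weq_trans (weq_cat2 Gg hH) (weq_cancel_inv e g _).
by rewrite (wlen_weq e_sym e_irr GH) -hle size_cat hs -(wlen_weq e_sym e_irr Gg)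
  (wlen_reduced e_sym e_irr hG) addnC.
Qed.

Lemma not_wle_of_deep_gaps K G g x : reduced e G -> weq e G g ->
  (forall a, exists2 b, ncomm e a b & deep_gap K G b) ->
  size x <= K -> ~ weq e x [::] -> ~ wle e g (x ++ g).
Proof.
move=> hG Gg gaps hx x_ntriv /(wle_reduced_cat hG Gg) [H hH hGH].
have heapE : foldr (act e) (pile e G) x = pile e (G ++ H).
  rewrite -(heap_reduced hGH) -(heap_reduced hG) -heap_cat.
  apply/(heap_weq e_sym e_irr)/weq_sym/(weq_trans (weq_cat2 Gg hH)).
  apply: weq_trans (weq_cancel_inv e g _) _.
  exact: weq_cat2 (weq_refl e x) (weq_sym Gg).
case: H hH {hGH} heapE => [|a H] hH heapE.
  exact/x_ntriv/(weq1_conj (g := g))/weq_sym.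
have [b ab gap] := gaps a.
by have := deep_gap_act_nil gap hx heapE; rewrite pile_cons ab.
Qed.

End Obstruction.

Section ComplementWalks.
Variables (T : finType) (e : rel T).
Hypothesis e_sym : symmetric e.

Local Notation ec := (gcompl e).

Lemma gcomplC x y : ec x y = ec y x.
Proof. by rewrite /gcompl eq_sym e_sym. Qed.

Lemma gcompl_ncomm x y : ec x y -> ncomm e x y.
Proof. by case/andP=> _ h; rewrite /ncomm h orbT. Qed.

Lemma gcompl_neq x y : ec x y -> x != y.
Proof. by case/andP. Qed.

Lemma path_top c s x : path ec c s -> top (pile e (c :: s) x) -> x = c.
Proof.
elim: s c => [|y s IH] c.
  by rewrite pile_cons pile_nil; case: ifP => //= _ _ /eqP.
rewrite /= => /andP[hcy hp]; rewrite pile_cons; case: ifP => [_ /eqP //|hnc].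
by move/(IH _ hp) => Ex; move: hnc; rewrite Ex gcompl_ncomm.
Qed.

Lemma path_reduced c s : path ec c s -> reduced e (c :: s).
Proof.
elim: s c => [|y s IH] c /=; first by rewrite pile_nil.
case/andP=> hcy hp; have /= -> := IH y hp; rewrite andbT pile_cons ncommC //.
by rewrite gcompl_ncomm // eq_sym (negbTE (gcompl_neq hcy)).
Qed.

(* For reduced [r], [rdesc r c] says that [c] is a right descent of [r]. *)
Fixpoint rdesc (r : seq T) (c : T) : bool :=
  if r is x :: r' then ((x == c) && ~~ has (ncomm e^~ c) r') || rdesc r' c
  else false.

Lemma rdesc_mem r c : rdesc r c -> c \in r.
Proof.
elim: r => //= x r IH /orP[/andP[/eqP -> _]|/IH h]; by rewrite inE ?eqxx // h orbT.
Qed.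

Lemma rdesc_clique r c c' : rdesc r c -> rdesc r c' -> c != c' -> e c c'.
Proof.
have later x r' y : x \in r' -> ~~ has (ncomm e^~ y) r' -> e y x.
  by move=> hx /hasPn /(_ x hx) /(ncommN_e e_sym).
elim: r => //= x r IH /orP[/andP[/eqP Ec hc]|hc] /orP[/andP[/eqP Ec' hc']|hc'] hne.
- by move: hne; rewrite -Ec -Ec' eqxx.
- exact: later (rdesc_mem hc') hc.
- by rewrite e_sym; apply: later (rdesc_mem hc) hc'.
- exact: IH.
Qed.

Lemma reduced_cat_path r c s : reduced e r -> path ec c s -> ~~ rdesc r c ->
  reduced e (r ++ c :: s).
Proof.
elim: r => [|x r IH] /=; first by move=> _ h _; apply: path_reduced.
case/andP=> ht hr hp; rewrite negb_or => /andP[hx hrc].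
rewrite IH // andbT pile_cat.
case E: (pile e r x) => [|b0 l]; last by move: ht; rewrite E.
apply/negP => /(path_top hp) Ex; move: hx; rewrite -Ex eqxx /= negbK has_count.
by rewrite -size_pile_count E.
Qed.

Lemma path_wpow d t L : cycle ec t -> path ec d t -> path ec d (wpow t L).
Proof.
case: t => [_ _|y ts]; first by elim: L.
rewrite /= rcons_path => /andP[hts hlast].
elim: L d => [|L IH] d //= /andP[hd _]; rewrite cat_path /= hd hts /=.
by apply: IH; rewrite /= hlast.
Qed.

End ComplementWalks.

Section ConnectedComplement.
Variables (T : finType) (e : rel T).
Hypothesis e_sym : symmetric e.
Hypothesis hV : 3 <= #|T|.
Hypothesis hconn : forall x y : T, connect (gcompl e) x y.

Local Notation ec := (gcompl e).

Lemma gcompl_neighbour x : exists y, ec x y.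
Proof.
have [y] : exists y, y \in predC1 x by apply/card_gt0P; rewrite cardC1; lia.
rewrite inE => hy; have [[|z p] /= hp Ey] := connectP (hconn x y).
  by move: hy; rewrite Ey eqxx.
by case/andP: hp => h _; exists z.
Qed.

Lemma exists_not_rdesc r : exists c, ~~ rdesc e r c.
Proof.
have /card_gt0P [x0 _] : 0 < #|T| by lia.
have [y0 hy0] := gcompl_neighbour x0.
case E1: (rdesc e r x0); last by exists x0; rewrite E1.
case E2: (rdesc e r y0); last by exists y0; rewrite E2.
by move: (hy0); rewrite /gcompl (rdesc_clique e_sym E1 E2 (gcompl_neq hy0)) andbF.
Qed.

Definition has_detour (b : T) : bool :=
  [exists z, [exists z', [&& ec b z, ec z z' & z' != b]]].

Lemma exists_detour_ncomm a : exists2 b, has_detour b & ncomm e a b.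
Proof.
case ga: (has_detour a); first by exists a; rewrite ?ga ?ncommxx.
have [z az] := gcompl_neighbour a.
have za z' : ec z z' -> z' = a.
  move=> zz'; apply/eqP; apply: contraFT ga => z'a.
  by apply/existsP; exists z; apply/existsP; exists z'; rewrite az zz'.
case: (pickP [pred z2 | ec a z2 && (z2 != z)]) => [z2 /andP[az2 z2z]|only_z].
  exists z; last exact: gcompl_ncomm.
  by apply/existsP; exists a; apply/existsP; exists z2; rewrite gcomplC // az az2.
have az' y : ec a y -> y = z.
  by move=> ay; apply/eqP; move: (only_z y); rewrite /= ay => /negbFE.
have closed_az : closed ec [:: a; z].
  move=> x y xy; rewrite !inE; apply/idP/idP => /orP[] /eqP Ex; subst.
  - by rewrite (az' _ xy) eqxx orbT.
  - by rewrite (za _ xy) eqxx.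
  - by rewrite gcomplC // in xy; rewrite (az' _ xy) eqxx orbT.
  - by rewrite gcomplC // in xy; rewrite (za _ xy) eqxx.
have : #|T| <= #|[:: a; z]|.
  apply/subset_leq_card/subsetP => y _.
  by rewrite -(closed_connect closed_az (hconn a y)) !inE eqxx.
by move/leq_trans/(_ (card_size _)); rewrite leqNgt hV.
Qed.

Section Zigzag.
Variables (K : nat) (b z z' : T).
Hypotheses (bz : ec b z) (zz' : ec z z') (z'b : z' != b).

Definition zigzag : seq T := flatten (nseq K [:: z; z']) ++ [:: z].

Lemma path_zigzag d : ec d z -> path ec d zigzag.
Proof.
rewrite /zigzag; elim: K d => [|k IH] d hd /=; first by rewrite hd.
by rewrite hd zz' /=; apply: IH; rewrite gcomplC.
Qed.

Lemma pile_zigzag : exists2 m, pile e zigzag b = nseq m false & K <= m.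
Proof.
have in_zz' k : all (fun u => (u == z) || (u == z')) (flatten (nseq k [:: z; z'])).
  by elim: k => //= k ->; rewrite !eqxx orbT.
have count_z k : k <= count (ncomm e^~ b) (flatten (nseq k [:: z; z'])).
  elim: k => //= k IH; rewrite ncommC // gcompl_ncomm //=.
  by rewrite add1n ltnS (leq_trans IH) ?leq_addl.
have bNz : b \notin zigzag.
  rewrite mem_cat inE (negbTE (gcompl_neq bz)) orbF.
  apply/negP=> /(allP (in_zz' K)).
  by rewrite (negbTE (gcompl_neq bz)) eq_sym (negbTE z'b).
exists (count (ncomm e^~ b) zigzag); first exact: pile_notin.
by rewrite count_cat (leq_trans (count_z K)) ?leq_addr.
Qed.

Lemma path_detour_block : path ec b (zigzag ++ b :: zigzag).
Proof.
rewrite cat_path path_zigzag // /zigzag cats1 last_rcons /= -cats1 gcomplC //.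
by rewrite bz path_zigzag.
Qed.

Lemma last_detour_block d : last d (zigzag ++ b :: zigzag) = z.
Proof. by rewrite last_cat /= /zigzag cats1 last_rcons. Qed.

Lemma deep_gap_detour_block : deep_gap e K (zigzag ++ b :: zigzag) b.
Proof.
have [m Em hm] := pile_zigzag; exists (nseq m false), (nseq (m - K) false).
by rewrite size_nseq pile_cat pile_cons ncommxx eqxx Em -nseqD subnKC.
Qed.

End Zigzag.

Lemma detour_walk K (l : seq T) d : exists2 s, path ec d s &
  forall b, b \in l -> has_detour b -> deep_gap e K s b.
Proof.
elim: l d => [|b l IH] d; first by exists [::].
case gb: (has_detour b); last first.
  have [s hs Hs] := IH d; exists s => // b'.
  by rewrite inE => /orP[/eqP ->|]; [rewrite gb | exact: Hs].
move: gb => /existsP [z /existsP [z' /and3P[bz zz' z'b]]].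
have [q hq Eq] := connectP (hconn d b); have [s hs Hs] := IH z.
exists (q ++ (zigzag K z z' ++ b :: zigzag K z z') ++ s).
  rewrite cat_path hq -Eq cat_path path_detour_block //.
  by rewrite last_detour_block.
move=> b'; rewrite inE => /orP[/eqP -> _|hb' gb'].
  exact/deep_gap_catl/deep_gap_catr/deep_gap_detour_block.
by rewrite catA; apply/deep_gap_catl/Hs.
Qed.

Lemma covering_path (l : seq T) d : exists2 s, path ec d s & {subset l <= d :: s}.
Proof.
elim: l d => [|b l IH] d; first by exists [::].
have [q hq Eq] := connectP (hconn d b); have [s hs Hs] := IH b.
exists (q ++ s); first by rewrite cat_path hq -Eq hs.
have bq : b \in d :: q ++ s by rewrite Eq -cat_cons mem_cat mem_last.
move=> y; rewrite inE => /orP[/eqP -> //|/Hs].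
by rewrite inE => /orP[/eqP -> //|ys]; rewrite mem_cat ys !orbT.
Qed.

Lemma covering_cycle d : exists t,
  [/\ cycle ec t, forall y, y \in t & path ec d t].
Proof.
have [x dx] := gcompl_neighbour d; have [y xy] := gcompl_neighbour x.
have [s hs Hs] := covering_path (enum T) x.
have [q hq Eq] := connectP (hconn (last x s) y).
exists (x :: s ++ q); split; last by rewrite /= dx cat_path hs hq.
- by rewrite /= rcons_cat cat_path hs rcons_path hq -Eq gcomplC.
- move=> y0; have := Hs y0; rewrite mem_enum => /(_ isT).
  by rewrite !inE mem_cat => /orP[->|->]; rewrite ?orbT.
Qed.

End ConnectedComplement.

Theorem proposition2p5 (T : finType) (e : rel T)
    (e_sym : symmetric e) (e_irr : irreflexive e)
    (hV : 3 <= #|T|)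
    (hconn : forall x y : T, connect (gcompl e) x y)
    (w : seq T) (S : seq (seq T)) :
  exists (v : seq T) (t : seq T),
    cycle (gcompl e) t /\ (forall x : T, x \in t) /\
    forall (L : nat), 1 <= L ->
      wlen e (w ++ v ++ wpow t L) = wlen e w + wlen e v + wlen e (wpow t L)
      /\ (forall x : seq T, x \in S -> ~ weq e x [::] ->
            ~ wle e (w ++ v ++ wpow t L) (x ++ w ++ v ++ wpow t L)).
Proof.
set K := \max_(x <- S) size x.
have [w0 w0w red_w0] := reduced_rep e_sym w.
have [c hc] := exists_not_rdesc e_sym hV hconn w0.
have [s hs gaps] := detour_walk e_sym hconn K (enum T) c.
have [t [ht cover hst]] := covering_cycle e_sym hV hconn (last c s).
exists (c :: s), t; do 2!split=> //; move=> L _; set P := wpow t L.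
have red : reduced e (w0 ++ (c :: s) ++ P).
  by apply: reduced_cat_path => //; rewrite cat_path hs path_wpow.
have Gg : weq e (w0 ++ (c :: s) ++ P) (w ++ (c :: s) ++ P).
  exact: weq_cat2 w0w (weq_refl e _).
split.
- have red_v := reduced_catl (reduced_catr red).
  have red_P := reduced_catr (reduced_catr red).
  rewrite -(wlen_weq e_sym e_irr Gg) -(wlen_weq e_sym e_irr w0w) !wlen_reduced //.
  by rewrite !size_cat addnA.
- move=> x xS x_ntriv; apply: (not_wle_of_deep_gaps e_sym e_irr red Gg _ _ x_ntriv).
    move=> a; have [b gb ab] := exists_detour_ncomm e_sym hV hconn a.
    exists b => //; apply/deep_gap_catl/(@deep_gap_catl _ _ _ [:: c])/deep_gap_catr.
    by apply: gaps; rewrite ?mem_enum.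
  exact: leq_bigmax_seq.
Qed.
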